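(* Let $n\ge 1$ and $K,T\in\mathcal S_n$. Then \[ \frac{K^c+T^c}{2}=\left\{x\in\mathbb R^n:\ \mathrm{Outrad}\big((K-x)\cup(x-T)\big)\le 1\right\}. \]
   Context: $B(x,r)$ is the closed Euclidean ball. For $A\subseteq\mathbb R^n$, $A^c=\bigcap_{x\in A}B(x,1)$ (with $\emptyset^c=\mathbb R^n$). $\mathcal S_n$ is the class of all sets of the form $\bigcap_{x\in A}B(x,1)$, $A\subseteq\mathbb R^n$. For a set $A$, $\mathrm{Outrad}(A)$ is the out-radius: the infimum of $R\ge0$ such that $A\subseteq B(z,R)$ for some $z\in\mathbb R^n$. $K-x=\{k-x:k\in K\}$, $x-T=\{x-t:t\in T\}$, and the sum on the left is the Minkowski sum. *)

From HB Require Import structures.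
From mathcomp Require Import all_boot all_order all_algebra.
From mathcomp Require Import all_classical all_reals.
From mathcomp Require Import ereal.
Set Implicit Arguments. Unset Strict Implicit. Unset Printing Implicit Defensive.
Import Order.TTheory GRing.Theory Num.Theory.
Local Open Scope classical_set_scope.
Local Open Scope ring_scope.

Definition enorm (R : realType) (n : nat) (v : 'rV[R]_n) : R :=
  Num.sqrt (\sum_(i < n) v ord0 i ^+ 2).

Definition cball (R : realType) (n : nat) (x : 'rV[R]_n) (r : R) : set 'rV[R]_n :=
  [set y | enorm (y - x) <= r].

(* A^c = \bigcap_{x in A} B(x,1)  (empty intersection = R^n) *)
Definition bpolar (R : realType) (n : nat) (A : set 'rV[R]_n) : set 'rV[R]_n :=
  [set y | forall x, A x -> cball x 1 y].

Definition in_Sn (R : realType) (n : nat) (K : set 'rV[R]_n) : Prop :=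
  exists A : set 'rV[R]_n, K = bpolar A.

(* out-radius, as an extended real (+oo for unbounded sets) *)
Definition Outrad (R : realType) (n : nat) (A : set 'rV[R]_n) : \bar R :=
  ereal_inf [set r%:E | r in
    [set r : R | 0 <= r /\ exists z : 'rV[R]_n, A `<=` cball z r]].

Definition halfsum (R : realType) (n : nat) (A B : set 'rV[R]_n) : set 'rV[R]_n :=
  [set z | exists a b, A a /\ B b /\ z = 2^-1 *: (a + b)].

Definition KxT (R : realType) (n : nat) (K T : set 'rV[R]_n) (x : 'rV[R]_n)
  : set 'rV[R]_n :=
  [set k - x | k in K] `|` [set x - t | t in T].

From HB Require Import structures.
From mathcomp Require Import all_boot all_order all_algebra.
From mathcomp Require Import all_classical all_reals.
From mathcomp Require Import ereal all_analysis.
From mathcomp Require Import lra.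
Import Order.TTheory GRing.Theory Num.Theory.
Import numFieldNormedType.Exports.
Local Open Scope classical_set_scope.
Local Open Scope ring_scope.

(* Writing a = x + z and b = x - z, the point x = (a + b) / 2 lies in
   (K^c + T^c) / 2 exactly when some z has x + z in K^c and x - z in T^c, that
   is, when K - x and x - T both lie in the unit ball B(z, 1).  It remains to
   see that Outrad A <= 1 forces A into some unit ball: the admissible centres
   for the radii 1 + e are closed, shrink as e decreases and sit in a compact
   set, so they have a common point. *)

Section euclidean_norm.
Context {R : realType} {n : nat}.
Implicit Types (u v : 'rV[R]_n).

Lemma enormN v : enorm (- v) = enorm v.
Proof. by rewrite /enorm; congr Num.sqrt; apply: eq_bigr => i _; rewrite mxE sqrrN. Qed.

Lemma enormBC u v : enorm (u - v) = enorm (v - u).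
Proof. by rewrite -opprB enormN. Qed.

Lemma mx_norm_le_enorm v : `|v| <= enorm v.
Proof.
rewrite [leLHS]mx_normrE; apply: bigmax_le => [|[i j] _] /=; first exact: sqrtr_ge0.
rewrite [i]ord1 -sqrtr_sqr ler_wsqrtr // (bigD1 j) //= lerDl.
by apply: sumr_ge0 => k _; exact: sqr_ge0.
Qed.

Lemma continuous_enorm : continuous (@enorm R n).
Proof.
have sum_sq : continuous (fun w : 'rV[R]_n => \sum_(i < n) w ord0 i ^+ 2).
  apply: (@continuous_big R _ +%R 0 predT add_continuous) => i _ w.
  apply: (@continuous_comp _ _ _ (fun v : 'rV[R]_n => v ord0 i) (fun x : R => x ^+ 2)).
    exact: coord_continuous.
  exact: exprn_continuous.
move=> v; apply: (@continuous_comp _ _ _ _ Num.sqrt v (sum_sq v)).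
exact: sqrt_continuous.
Qed.

Lemma closed_enormB_le u r : closed [set v | enorm (u - v) <= r].
Proof.
have cont : continuous (fun v => enorm (u - v)).
  move=> v; apply: (@continuous_comp _ _ _ (fun w : 'rV[R]_n => u - w) (@enorm R n)).
    by apply: (continuousB (f := fun=> u) (g := id)); [exact: cst_continuous | exact: cvg_id].
  exact: continuous_enorm.
exact: (proj1 (continuous_closedP _) cont _ (@closed_le R r)).
Qed.

End euclidean_norm.

Section centers.
Variables (R : realType) (n : nat).
Implicit Types (A : set 'rV[R]_n) (r : R).

Definition centers A r := [set z : 'rV[R]_n | A `<=` cball z r].

Lemma centersS A r s : r <= s -> centers A r `<=` centers A s.
Proof. by move=> rs z Az a /Az; rewrite /cball /= => /le_trans; apply. Qed.

Lemma closed_centers A r : closed (centers A r).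
Proof.
have -> : centers A r = \bigcap_(a in A) [set z | enorm (a - z) <= r] by [].
by apply: closed_bigI => a _; exact: closed_enormB_le.
Qed.

Lemma bounded_centers A r : A !=set0 -> bounded_set (centers A r).
Proof.
move=> [a Aa]; rewrite /= /bounded_near; near=> M => z /(_ a Aa).
rewrite /cball /= enormBC => zar.
rewrite -[z in `|z|](subrK a); apply: le_trans (ler_normD _ _) _.
have za : `|z - a| <= r := le_trans (mx_norm_le_enorm _) zar.
apply: le_trans (lerD za (lexx `|a|)) _.
near: M; apply: nbhs_pinfty_ge; exact: num_real.
Unshelve. all: by end_near.
Qed.

Lemma Outrad_centers_neq0 A r e :
  (Outrad A <= r%:E)%E -> 0 < e -> centers A (r + e) !=set0.
Proof.
move=> hO e0; have : (Outrad A < (r + e)%:E)%E.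
  by apply: le_lt_trans hO _; rewrite lte_fin ltrDl.
move/ereal_inf_lt => [_ [s [_ [z Az]] <-]]; rewrite lte_fin => /ltW se.
by exists z; exact: centersS se _ Az.
Qed.

Lemma centers_neq0 A r :
  A !=set0 -> (forall e, 0 < e -> centers A (r + e) !=set0) ->
  centers A r !=set0.
Proof.
move=> A0 hne.
pose F := filter_from [set e : R | 0 < e] (fun e => centers A (r + e)).
have F_proper : ProperFilter F.
  apply: filter_from_proper => [|e /hne //].
  apply: filter_from_filter; first by exists 1; rewrite /= ltr01.
  move=> d e d0 e0; exists (Order.min d e); first by rewrite /= lt_min d0 e0.
  by move=> z hz; split; apply: centersS hz; rewrite lerD2l ge_min lexx ?orbT.
have [z [_ Fz]] : centers A (r + 1) `&` cluster F !=set0.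
  apply: bounded_closed_compact; first exact: bounded_centers.
    exact: closed_centers.
  by exists 1 => //=.
exists z => a Aa; apply/ler_addgt0Pr => e e0.
have : closure (centers A (r + e)) z by move: Fz; rewrite clusterE; apply; exists e.
by rewrite -(proj1 (closure_id _) (closed_centers A (r + e))); apply.
Qed.

Lemma Outrad_leP A r :
  0 <= r -> (Outrad A <= r%:E)%E <-> exists z, A `<=` cball z r.
Proof.
move=> r0; split=> [hO|[z Az]]; last first.
  by apply: ereal_inf_lbound; exists r => //; split => //; exists z.
have [->|/set0P A0] := eqVneq A set0; first by exists 0.
by apply: centers_neq0 A0 _ => e; exact: Outrad_centers_neq0.
Qed.

End centers.

Section midpoints.
Variables (R : realType) (n : nat).
Implicit Types (A B K T : set 'rV[R]_n) (x z : 'rV[R]_n).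

Lemma halfsumP A B x : halfsum A B x <-> exists z, A (x + z) /\ B (x - z).
Proof.
split=> [[a [b [Aa [Bb ->]]]]|[z [Axz Bxz]]].
  exists (2^-1 *: (a - b)).
  have -> : 2^-1 *: (a + b) + 2^-1 *: (a - b) = a by apply/rowP => j; rewrite !mxE; lra.
  have -> : 2^-1 *: (a + b) - 2^-1 *: (a - b) = b by apply/rowP => j; rewrite !mxE; lra.
  by split.
exists (x + z), (x - z); do 2!split => //.
by apply/rowP => j; rewrite !mxE; lra.
Qed.

Lemma KxT_sub_cballP K T x z :
  KxT K T x `<=` cball z 1 <-> bpolar K (x + z) /\ bpolar T (x - z).
Proof.
have shiftK k : (k - x - z = - (x + z - k)) by rewrite opprB opprD addrA.
have shiftT t : (x - t - z = x - z - t) by rewrite addrAC.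
split=> [sub|[hK hT] _ [[k Kk <-]|[t Tt <-]]]; rewrite /cball /=.
- split=> [k Kk|t Tt]; rewrite /cball /=.
  + by rewrite -enormN -shiftK; apply: sub; left; exists k.
  + by rewrite -shiftT; apply: sub; right; exists t.
- by rewrite shiftK enormN; exact: hK.
- by rewrite shiftT; exact: hT.
Qed.

End midpoints.

Theorem lemma1p27 (R : realType) (n : nat) (hn : (1 <= n)%N)
  (K T : set 'rV[R]_n) (hK : in_Sn K) (hT : in_Sn T) :
  halfsum (bpolar K) (bpolar T) =
  [set x | (Outrad (KxT K T x) <= 1%:E)%E].
Proof.
apply/seteqP; split=> x /=.
- by case/halfsumP => z /KxT_sub_cballP hz; apply/Outrad_leP => //; exists z.
- by case/Outrad_leP => // z /KxT_sub_cballP hz; apply/halfsumP; exists z.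
Qed.
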